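(* Let $w=w_1\cdots w_n$ be a word of length $n\ge 2$ using only two letters, such that $w_i\ne w_{n-i+1}$ for all $1\le i\le n$. Then for every positive integer $d$, $f(w,d)=\frac14\left((n+2)^d-(n-2)^d\right)$.
   Context: Let $[n]=\{1,\dots,n\}$, $n\ge 2$, $d\ge 1$. For $p\in[n]^d$ and $v\in\{-1,0,1\}^d$ with $v\ne\vec 0$, if $p+tv\in[n]^d$ for all $0\le t\le n-1$, the set $\ell=\{p,p+v,\dots,p+(n-1)v\}$ is called a line (with initial point $p$ and direction $v$). Each line has a unique representation $(p;v)$ in which the first nonzero coordinate of $v$ is $+1$ (its canonical pair); for such a representation write $\ell_i=p+(i-1)v$ for $1\le i\le n$. An $(n,d)$-grid is a function $G:[n]^d\to\Sigma$ for an arbitrary set of letters $\Sigma$. For a word $w=w_1\cdots w_n$, a line $\ell$ contains $w$ if $G(\ell_1)G(\ell_2)\cdots G(\ell_n)=w$ or $G(\ell_n)\cdots G(\ell_1)=w$. $f(w,G)$ is the number of lines of $[n]^d$ containing $w$, and $f(w,d)=\max_G f(w,G)$ over all $(n,d)$-grids $G$. *)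

From mathcomp Require Import all_boot all_order all_algebra.
Set Implicit Arguments. Unset Strict Implicit. Unset Printing Implicit Defensive.
Import Order.TTheory GRing.Theory Num.Theory.

(* Points of [n]^d; coordinate value k : 'I_n stands for k+1 in [n]. *)
Definition point (d n : nat) := {ffun 'I_d -> 'I_n}.

(* Directions in {-1,0,1}^d; c : 'I_3 encodes the integer c - 1. *)
Definition dir (d : nat) := {ffun 'I_d -> 'I_3}.
Definition dval (c : 'I_3) : int := (c%:Z - 1)%R.

Definition coord d n (p : point d n) (v : dir d) (t : nat) (i : 'I_d) : int :=
  ((p i)%:Z + t%:Z * dval (v i))%R.

Definition valid_line d n (p : point d n) (v : dir d) : bool :=
  [exists i, v i != 1 :> nat] &&
  [forall t : 'I_n, forall i, (0 <= coord p v t i)%R && (coord p v t i < n%:Z)%R].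

Definition canonical_dir d (v : dir d) : bool :=
  [forall i, ((v i != 1 :> nat) && [forall j : 'I_d, (j < i) ==> (v j == 1 :> nat)])
              ==> (v i == 2 :> nat)].

(* the point p + t v (meaningful when valid_line p v) ; it is ell_{t+1} *)
Definition pt d n (p : point d n) (v : dir d) (t : nat) : point d n :=
  [ffun i => insubd (p i) `|coord p v t i|%N].

Definition contains (S : eqType) d n (w : 'I_n -> S) (G : point d n -> S)
    (p : point d n) (v : dir d) : bool :=
  [forall t : 'I_n, G (pt p v t) == w t] ||
  [forall t : 'I_n, G (pt p v (rev_ord t)) == w t].

(* f(w,G): number of lines (counted through their canonical pairs) containing w *)
Definition fcount (S : eqType) d n (w : 'I_n -> S) (G : point d n -> S) : nat :=
  #|[set pv : point d n * dir d |
       [&& canonical_dir pv.2, valid_line pv.1 pv.2 & contains w G pv.1 pv.2]]|.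

Definition is_fmax (S : eqType) d n (w : 'I_n -> S) (m : nat) : Prop :=
  (exists G : point d n -> S, fcount w G = m) /\
  (forall G : point d n -> S, fcount w G <= m).

(* Since [w_t <> w_(n+1-t)], n = 2k + 2 is even and the central letters a = w_(k+1) and
   b = w_(k+2) differ. Call two points equivalent when they agree in every coordinate except
   where one of them takes the value k + 1 and the other k + 2. The middle pair
   (l_(k+1), l_(k+2)) of a line consists of two distinct equivalent points, and every ordered
   pair of distinct equivalent points is the middle pair of exactly one oriented line. A line
   containing w colours its middle pair (a, b) or (b, a), so f(w, G) is at most the number of
   pairs (x, y) of equivalent points with G x = a and G y = b. In a class of size m there are
   at most m^2/4 such pairs, and none when m = 1; the squared class sizes add up to (n + 2)^d
   and (n - 2)^d classes are singletons, whence 4 f(w, G) <= (n + 2)^d - (n - 2)^d.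
   Equality holds for the grid colouring x by the parity of the number of coordinates i with
   w_(x_i) = b: since this predicate is reversed by t |-> n + 1 - t, along every line the parity
   is constant or reproduces w or its reverse, and reflecting a central coordinate swaps the two
   colours inside a class, so every non-singleton class is split evenly. *)

From Pilot Require Import Defs.
From mathcomp Require Import all_boot all_order all_algebra zify.
Set Implicit Arguments. Unset Strict Implicit. Unset Printing Implicit Defensive.
Import GRing.Theory.

Lemma four_mul_le_sqr a b m : a + b <= m -> 4 * (a * b) <= m * m.
Proof. by move=> ab_le; rewrite mulnn (leq_trans (nat_AGM2 a b).1) // leq_exp2r. Qed.

Lemma sum_option (T : finType) (F : option T -> nat) :
  \sum_(o : option T) F o = F None + \sum_(t : T) F (Some t).
Proof.
rewrite (bigD1 None) //=; congr (_ + _).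
rewrite (reindex_omap Some id) /=; last by case.
by apply: eq_bigl => t; rewrite eqxx.
Qed.

Lemma sum_ffun_prod (I T : finType) (F : T -> nat) :
  \sum_(f : {ffun I -> T}) \prod_(i : I) F (f i) = (\sum_(t : T) F t) ^ #|I|.
Proof.
by rewrite -(bigA_distr_bigA (fun (_ : I) (t : T) => F t)) /= prod_nat_const.
Qed.

Lemma antipalindromic_even (S : eqType) n (w : 'I_n -> S) :
  (forall t, w t != w (rev_ord t)) -> ~~ odd n.
Proof.
move=> w_anti; apply/negP => n_odd; have := odd_double_half n; rewrite n_odd => n_eq.
have mid_lt : n./2 < n by lia.
have := w_anti (Ordinal mid_lt).
suff -> : rev_ord (Ordinal mid_lt) = Ordinal mid_lt by rewrite eqxx.
by apply: val_inj => /=; lia.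
Qed.

Lemma two_values (S : eqType) (a b x y z : S) :
  x = a \/ x = b -> y = a \/ y = b -> z = a \/ z = b -> x != y -> z = x \/ z = y.
Proof. by case=> -> [] -> [] ->; rewrite ?eqxx //; [left | right | right | left]. Qed.

Section LineCoordinates.
Variables d n : nat.
Implicit Types (p : point d n) (v : dir d).

Lemma pt0 p v : pt p v 0 = p.
Proof.
apply/ffunP => i; apply: val_inj.
by rewrite ffunE val_insubd /Defs.coord mul0r addr0 /= ltn_ord.
Qed.

Lemma val_ptE p v t i : valid_line p v -> t < n ->
  (pt p v t i : nat) =
    if v i == 1 :> nat then (p i : nat) else if v i == 2 :> nat then t else n.-1 - t.
Proof.
move=> /andP [_ /forallP inside] t_lt.
have last_lt : n.-1 < n by lia.
have /forallP /(_ i) /andP [lo hi] := inside (Ordinal last_lt).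
rewrite /pt ffunE val_insubd; move: lo hi; rewrite /Defs.coord /dval /=.
have := ltn_ord (p i).
by case: (v i) => [[|[|[|m]]] hm] //= *; case: ifP; lia.
Qed.

Lemma ptE p v (t : 'I_n) i : valid_line p v ->
  pt p v t i = if v i == 1 :> nat then p i else if v i == 2 :> nat then t else rev_ord t.
Proof.
move=> pv_valid; apply: val_inj => /=; rewrite val_ptE //.
by case: (_ == 1 :> nat); case: (_ == 2 :> nat) => //=; lia.
Qed.

Lemma valid_line_start p v i : valid_line p v -> 0 < n ->
  (p i : nat) = if v i == 1 :> nat then (p i : nat) else if v i == 2 :> nat then 0 else n.-1.
Proof. by move=> pv_valid n_gt0; rewrite -{1}(pt0 p v) val_ptE // subn0. Qed.

End LineCoordinates.

Definition opp_dir d (v : dir d) : dir d := [ffun i => rev_ord (v i)].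

Lemma opp_dirE d (v : dir d) i : (opp_dir v i : nat) = 2 - v i.
Proof. by rewrite ffunE. Qed.

Lemma canonical_dirE d (v : dir d) i0 : v i0 != 1 :> nat ->
  (forall j, v j != 1 :> nat -> i0 <= j) -> canonical_dir v = (v i0 == 2 :> nat).
Proof.
move=> v_i0 i0_min; apply/forallP/idP => [/(_ i0)|v_i0_eq2 i].
  rewrite v_i0 /= => /implyP; apply; apply/forallP => j; apply/implyP => lt_ji.
  by apply: contraTT lt_ji => /i0_min; rewrite -leqNgt.
apply/implyP => /andP [v_i /forallP before_i].
suff -> : i = i0 by [].
apply/val_inj/eqP; rewrite eqn_leq i0_min // andbT leqNgt.
by apply/negP => lt_i0i; have := before_i i0; rewrite lt_i0i (negbTE v_i0).
Qed.

Lemma canonical_dir_opp d (v : dir d) : [exists i, v i != 1 :> nat] ->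
  canonical_dir (opp_dir v) = ~~ canonical_dir v.
Proof.
have opp_neq1 j : (opp_dir v j != 1 :> nat) = (v j != 1 :> nat).
  by rewrite opp_dirE; have := ltn_ord (v j); case: (v j) => [[|[|[|m]]] hm].
case/existsP => j0 v_j0.
case: (@arg_minnP _ j0 (fun i => v i != 1 :> nat) (fun i : 'I_d => i : nat) v_j0)
  => i0 v_i0 i0_min.
rewrite (canonical_dirE v_i0 i0_min) (@canonical_dirE _ _ i0); first last.
- by move=> j; rewrite opp_neq1; apply: i0_min.
- by rewrite opp_neq1.
by rewrite opp_dirE; move: v_i0; have := ltn_ord (v i0); case: (v i0) => [[|[|[|m]]] hm].
Qed.

Section ParityGrid.
Variables (d n : nat) (S : eqType) (a b : S) (beta : 'I_n -> bool) (w : 'I_n -> S).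
Hypotheses (beta_rev : forall t, beta (rev_ord t) = ~~ beta t)
           (wE : forall t, w t = if beta t then b else a).

Definition parity (x : point d n) : bool := \big[addb/false]_(i < d) beta (x i).

Definition parity_grid (x : point d n) : S := if parity x then b else a.

Definition mirror_at (i0 : 'I_d) (x : point d n) : point d n :=
  [ffun i => if i == i0 then rev_ord (x i) else x i].

Lemma mirror_atK i0 : involutive (mirror_at i0).
Proof.
by move=> x; apply/ffunP => i; rewrite !ffunE; case: eqP => // _; rewrite rev_ordK.
Qed.

Lemma parity_mirror_at i0 x : parity (mirror_at i0 x) = ~~ parity x.
Proof.
rewrite /parity (bigD1 i0) //= [in RHS](bigD1 i0) //= ffunE eqxx beta_rev addNb.
by congr (~~ (_ (+) _)); apply: eq_bigr => i /negbTE i_neq; rewrite ffunE i_neq.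
Qed.

(* Each coordinate of [pt p v t] is constant, [t] or [rev_ord t], and [beta (rev_ord t)] is
   [~~ beta t]: every moving coordinate adds [beta t] to a constant. *)
Lemma parity_pt p v : valid_line p v ->
  exists c e, forall t : 'I_n, parity (pt p v t) = c (+) (e && beta t).
Proof.
move=> pv_valid.
exists (\big[addb/false]_(i < d) if v i == 1 :> nat then beta (p i) else v i == 0 :> nat).
exists (\big[addb/false]_(i < d) (v i != 1 :> nat)) => t.
rewrite /parity big_distrl -big_split /=; apply: eq_bigr => i _; rewrite ptE //.
by have := ltn_ord (v i); case: (v i) => [[|[|[|m]]] hm] //= _; rewrite ?beta_rev ?addbF.
Qed.

Lemma contains_parity_grid p v (s t : 'I_n) : valid_line p v ->
  parity (pt p v s) != parity (pt p v t) -> contains w parity_grid p v.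
Proof.
move=> pv_valid; have [c [e parityE]] := parity_pt pv_valid.
rewrite !parityE; case: e parityE => parityE; last by rewrite /= eqxx.
move=> _; rewrite /contains /parity_grid; apply/orP.
case: c parityE => parityE; [right | left]; apply/forallP => u; rewrite parityE wE //=.
by rewrite beta_rev negbK.
Qed.

End ParityGrid.

Section CentralPair.
Variables d n k : nat.
Hypothesis n_eq : n = k.*2.+2.
Implicit Types (x y : point d n) (l : point d n * dir d) (t : 'I_n).
Implicit Types (c : {ffun 'I_d -> option 'I_n}).

(* Positions are 0-based: the central values are [k] and [k.+1]. *)
Lemma mid_lo_lt : k < n. Proof. by rewrite n_eq; lia. Qed.
Lemma mid_hi_lt : k.+1 < n. Proof. by rewrite n_eq; lia. Qed.
Definition mid_lo : 'I_n := Ordinal mid_lo_lt.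
Definition mid_hi : 'I_n := Ordinal mid_hi_lt.

Lemma rev_mid_lo : rev_ord mid_lo = mid_hi.
Proof. by apply: val_inj; rewrite /= n_eq; lia. Qed.

Lemma rev_mid_hi : rev_ord mid_hi = mid_lo.
Proof. by rewrite -rev_mid_lo rev_ordK. Qed.

Definition central (t : 'I_n) : bool := (t == mid_lo) || (t == mid_hi).

Lemma central_rev t : central (rev_ord t) = central t.
Proof.
have rev_eq s : (rev_ord t == s) = (t == rev_ord s).
  by rewrite -{1}(rev_ordK s) (inj_eq rev_ord_inj).
by rewrite /central !rev_eq rev_mid_lo rev_mid_hi orbC.
Qed.

Definition collapse_coord (t : 'I_n) : option 'I_n := if central t then None else Some t.

Definition collapse x : {ffun 'I_d -> option 'I_n} := [ffun i => collapse_coord (x i)].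

Lemma collapseE x i : collapse x i = collapse_coord (x i).
Proof. by rewrite ffunE. Qed.

Lemma same_collapse x y i : collapse x = collapse y ->
  x i = y i \/ (x i : nat) = k /\ (y i : nat) = k.+1 \/ (x i : nat) = k.+1 /\ (y i : nat) = k.
Proof.
move/ffunP/(_ i); rewrite !collapseE /collapse_coord.
case: ifP => [x_c|_]; case: ifP => [y_c|_] //; last by case=> ->; left.
move=> _; move: x_c y_c; rewrite /central -!val_eqE /=.
case/orP => /eqP x_eq /orP [] /eqP y_eq;
  by [left; apply: val_inj => /=; lia | right; left | right; right].
Qed.

Definition mid_pair l := (pt l.1 l.2 mid_lo, pt l.1 l.2 mid_hi).

Lemma collapse_mid_pair l : valid_line l.1 l.2 -> collapse (mid_pair l).1 = collapse (mid_pair l).2.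
Proof.
move=> l_valid; apply/ffunP => i; rewrite !collapseE !ptE //.
case: ifP => // _; rewrite /collapse_coord /central rev_mid_lo rev_mid_hi.
by case: (_ == 2 :> nat); rewrite !eqxx ?orbT.
Qed.

Definition dir_through x y : dir d := [ffun i => inord (y i + 1 - x i)].

Definition start_through x y : point d n :=
  [ffun i => insubd (x i) (if dir_through x y i == 2 :> nat then 0
                           else if dir_through x y i == 0 :> nat then n.-1 else x i)].

Definition line_through x y := (start_through x y, dir_through x y).

Lemma line_through_cases x y i : collapse x = collapse y ->
  [/\ (x i : nat) = y i, (dir_through x y i : nat) = 1 & (start_through x y i : nat) = x i] \/
  [/\ (x i : nat) = k, (y i : nat) = k.+1, (dir_through x y i : nat) = 2
     & (start_through x y i : nat) = 0] \/
  [/\ (x i : nat) = k.+1, (y i : nat) = k, (dir_through x y i : nat) = 0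
     & (start_through x y i : nat) = n.-1].
Proof.
move=> xy; have dirE : (dir_through x y i : nat) = y i + 1 - x i.
  rewrite [in LHS]ffunE inordK //.
  by case: (same_collapse i xy) => [->|[[-> ->]|[-> ->]]]; lia.
have startE : (start_through x y i : nat) = if dir_through x y i == 2 :> nat then 0
    else if dir_through x y i == 0 :> nat then n.-1 else x i.
  rewrite [in LHS]ffunE val_insubd; have := ltn_ord (x i).
  by case: (dir_through x y i == 2 :> nat); case: (dir_through x y i == 0 :> nat) => /=;
    case: ifP; lia.
rewrite dirE; case: (same_collapse i xy) => [xy_i|[[x_i y_i]|[x_i y_i]]].
- by left; rewrite startE dirE -xy_i addKn.
- right; left; split => //; first by rewrite x_i y_i; lia.
  by rewrite startE dirE x_i y_i (_ : k.+1 + 1 - k = 2) //; lia.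
- right; right; split => //; first by rewrite x_i y_i; lia.
  by rewrite startE dirE x_i y_i (_ : k + 1 - k.+1 = 0) //; lia.
Qed.

Lemma dir_through_swap x y : collapse x = collapse y -> dir_through y x = opp_dir (dir_through x y).
Proof.
move=> xy; have yx : collapse y = collapse x by [].
apply/ffunP => i; apply: val_inj; rewrite /= opp_dirE.
case: (line_through_cases i xy) => [[xy_i -> _]|[[x_i y_i -> _]|[x_i y_i -> _]]];
  case: (line_through_cases i yx) => [[yx_i -> _]|[[y_i' x_i' -> _]|[y_i' x_i' -> _]]]; lia.
Qed.

Lemma valid_line_through x y : collapse x = collapse y -> x != y ->
  valid_line (start_through x y) (dir_through x y).
Proof.
move=> xy x_neq_y; apply/andP; split.
  have [i x_neq_y_i] : exists i, x i != y i.
    apply/existsP; apply: contraR x_neq_y => /existsPn eq_xy.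
    by apply/eqP/ffunP => i; apply/eqP/negPn.
  apply/existsP; exists i.
  case: (line_through_cases i xy) => [[xy_i _ _]|[[_ _ -> _]|[_ _ -> _]]] //.
  by rewrite -val_eqE /= xy_i eqxx in x_neq_y_i.
apply/forallP => t; apply/forallP => i; rewrite /Defs.coord /dval.
have := ltn_ord t; have := ltn_ord (x i).
case: (line_through_cases i xy) => [[_ -> ->]|[[_ _ -> ->]|[_ _ -> ->]]] /=; lia.
Qed.

Lemma mid_pair_line_through x y : collapse x = collapse y -> x != y ->
  mid_pair (line_through x y) = (x, y).
Proof.
move=> xy x_neq_y; have xy_valid := valid_line_through xy x_neq_y.
congr (_, _); apply/ffunP => i; apply: val_inj;
  rewrite /= ?(val_ptE i xy_valid mid_lo_lt) ?(val_ptE i xy_valid mid_hi_lt);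
  case: (line_through_cases i xy) => [[xy_i -> ->]|[[x_i y_i -> ->]|[x_i y_i -> ->]]] //=; lia.
Qed.

Lemma line_through_mid_pair l :
  valid_line l.1 l.2 -> line_through (mid_pair l).1 (mid_pair l).2 = l.
Proof.
case: l => p v pv_valid; have xy := collapse_mid_pair pv_valid.
move: xy; rewrite /mid_pair /=; set x := pt p v mid_lo; set y := pt p v mid_hi => xy.
have n_gt0 : 0 < n by rewrite n_eq.
congr (_, _); apply/ffunP => i; apply: val_inj => /=.
all: have xE : (x i : nat) = _ := val_ptE i pv_valid mid_lo_lt.
all: have yE : (y i : nat) = _ := val_ptE i pv_valid mid_hi_lt.
all: have := valid_line_start i pv_valid n_gt0; have := ltn_ord (p i).
all: move: xE yE; case: (v i) => [[|[|[|m]]] hm] //= xE yE.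
all: by case: (line_through_cases i xy) => [[]|[[]|[]]]; lia.
Qed.

Lemma canonical_dir_mid_pair_swap l1 l2 : valid_line l1.1 l1.2 -> valid_line l2.1 l2.2 ->
  mid_pair l1 = ((mid_pair l2).2, (mid_pair l2).1) -> canonical_dir l1.2 = ~~ canonical_dir l2.2.
Proof.
move=> l1_valid l2_valid mid_eq.
have dir_mid l : valid_line l.1 l.2 -> dir_through (mid_pair l).1 (mid_pair l).2 = l.2.
  by move/line_through_mid_pair/(congr1 snd).
rewrite -(dir_mid _ l1_valid) -(dir_mid _ l2_valid) mid_eq dir_through_swap ?canonical_dir_opp //.
  by rewrite dir_mid //; case/andP: l2_valid.
exact: collapse_mid_pair.
Qed.

Definition fiber c := [set x : point d n | collapse x == c].

Definition fiber_size_coord (o : option 'I_n) : nat := if o is Some t then ~~ central t else 2.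

Definition rigid_coord (o : option 'I_n) : nat := if o is Some t then ~~ central t else 0.

(* [rigid c] is [1] when [c] is the class of a point with no central coordinate, else [0]. *)
Definition rigid c : nat := \prod_(i < d) rigid_coord (c i).

Lemma card_central : #|[pred t | central t]| = 2.
Proof.
have mid_neq : mid_lo != mid_hi by rewrite -val_eqE /= ltn_eqF.
by rewrite (eq_card (B := pred2 mid_lo mid_hi)) ?card2 ?mid_neq // => t; rewrite !inE.
Qed.

Lemma sum_noncentral : \sum_(t : 'I_n) (~~ central t : nat) = n - 2.
Proof.
rewrite -[n in RHS]card_ord -(cardC [pred t | central t]) card_central addKn.
by rewrite -sum1_card [RHS]big_mkcond; apply: eq_bigr => t _; rewrite !inE; case: (central t).
Qed.

Lemma card_collapse_coord o : #|[pred t | collapse_coord t == o]| = fiber_size_coord o.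
Proof.
rewrite /collapse_coord; case: o => [s|] /=; last first.
  by rewrite -card_central; apply: eq_card => t; rewrite !inE; case: (central t).
case: (boolP (central s)) => s_c /=.
  by apply: eq_card0 => t; rewrite !inE; case: ifP => // t_nc; apply: contraFF t_nc => /eqP [->].
rewrite -(card1 s); apply: eq_card => t; rewrite !inE.
case: ifP => [t_c|_]; last by apply/eqP/eqP => [[]|->].
by apply/esym/negbTE; apply: contraTneq t_c => ->.
Qed.

Lemma card_fiber c : #|fiber c| = \prod_(i < d) fiber_size_coord (c i).
Proof.
rewrite (eq_card (B := family (fun i => [pred t | collapse_coord t == c i]))); last first.
  move=> x; rewrite !inE; apply/eqP/familyP => [<- i|x_c]; first by rewrite !inE collapseE.
  by apply/ffunP => i; rewrite collapseE; apply/eqP; exact: x_c.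
rewrite card_family foldrE big_map big_enum; apply: eq_bigr => i _.
exact: card_collapse_coord.
Qed.

Lemma sum_card_fiber_sqr :
  \sum_(c : {ffun 'I_d -> option 'I_n}) #|fiber c| * #|fiber c| = (n + 2) ^ d.
Proof.
under eq_bigr do rewrite card_fiber -big_split.
rewrite (sum_ffun_prod _ (fun o => fiber_size_coord o * fiber_size_coord o)) card_ord sum_option /=.
have -> : n + 2 = 2 * 2 + (n - 2) by rewrite n_eq; lia.
by rewrite -sum_noncentral; congr ((_ + _) ^ _); apply: eq_bigr => t _; case: (central t).
Qed.

Lemma sum_rigid : \sum_(c : {ffun 'I_d -> option 'I_n}) rigid c = (n - 2) ^ d.
Proof. by rewrite sum_ffun_prod card_ord sum_option /= sum_noncentral. Qed.

Lemma rigid_None c i : c i = None -> rigid c = 0.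
Proof. by move=> c_i; rewrite /rigid (bigD1 i) //= c_i. Qed.

Lemma rigid_le1 c : rigid c <= 1.
Proof.
apply: (big_ind (fun m => m <= 1)) => // [m1 m2|i _]; first by rewrite -[1]/(1 * 1); apply: leq_mul.
by case: (c i) => //= t; case: (central t).
Qed.

Lemma card_fiber_rigid c : (forall i, c i != None) -> #|fiber c| = rigid c.
Proof. by move=> c_some; rewrite card_fiber; apply: eq_bigr => i _; case: (c i) (c_some i). Qed.

Lemma collapse_mirror_at x i0 : collapse x i0 = None -> collapse (mirror_at i0 x) = collapse x.
Proof.
move=> x_i0; apply/ffunP => i; rewrite !collapseE ffunE.
by case: eqP => [->|//]; move: x_i0; rewrite collapseE /collapse_coord central_rev; case: ifP.
Qed.

Section SplitPairs.
Variables (S : eqType) (w : 'I_n -> S).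
Hypothesis w_mid : w mid_lo != w mid_hi.
Implicit Types (G : point d n -> S).

Definition colored_fiber G (s : S) c := [set x in fiber c | G x == s].

Definition split_pairs G := [set xy : point d n * point d n |
  [&& collapse xy.1 == collapse xy.2, G xy.1 == w mid_lo & G xy.2 == w mid_hi]].

Lemma contains_mid_pair G l : contains w G l.1 l.2 ->
  G (mid_pair l).1 = w mid_lo /\ G (mid_pair l).2 = w mid_hi \/
  G (mid_pair l).1 = w mid_hi /\ G (mid_pair l).2 = w mid_lo.
Proof.
case/orP => /forallP reads.
  by left; split; apply/eqP; [apply: reads mid_lo | apply: reads mid_hi].
have := reads mid_hi; have := reads mid_lo; rewrite rev_mid_lo rev_mid_hi.
by move=> /eqP hi_eq /eqP lo_eq; right.
Qed.

Definition orient G l :=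
  if G (mid_pair l).1 == w mid_lo then mid_pair l else ((mid_pair l).2, (mid_pair l).1).

Lemma fcount_le_split_pairs G : fcount w G <= #|split_pairs G|.
Proof.
rewrite /fcount -(card_in_imset (f := orient G)); last first.
  move=> l1 l2; rewrite !inE => /and3P [l1_can l1_valid _] /and3P [l2_can l2_valid _].
  have mid_inj : mid_pair l1 = mid_pair l2 -> l1 = l2.
    move=> mid_eq.
    by rewrite -(line_through_mid_pair l1_valid) -(line_through_mid_pair l2_valid) mid_eq.
  have mid_swap : mid_pair l1 <> ((mid_pair l2).2, (mid_pair l2).1).
    by move/(canonical_dir_mid_pair_swap l1_valid l2_valid); rewrite l1_can l2_can.
  rewrite /orient; case: ifP => _; case: ifP => _ orient_eq.
  - exact: mid_inj.
  - by case: (mid_swap orient_eq).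
  - by case: mid_swap; rewrite -orient_eq; case: (mid_pair l1).
  - by apply: mid_inj; move: orient_eq; case: (mid_pair l1); case: (mid_pair l2) => ? ? ? ? [-> ->].
apply/subset_leq_card/subsetP => _ /imsetP [l + ->]; rewrite inE => /and3P [_ l_valid l_contains].
have := collapse_mid_pair l_valid; rewrite inE /orient.
case: (contains_mid_pair l_contains) => -[G_lo G_hi] mid_eq.
  by rewrite G_lo eqxx /= G_lo G_hi mid_eq !eqxx.
by rewrite G_lo [w mid_hi == _]eq_sym (negbTE w_mid) /= G_lo G_hi mid_eq !eqxx.
Qed.

Lemma card_split_pairs G : #|split_pairs G| =
  \sum_c #|colored_fiber G (w mid_lo) c| * #|colored_fiber G (w mid_hi) c|.
Proof.
rewrite -sum1_card (partition_big (fun xy => collapse xy.1) predT) //=.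
apply: eq_bigr => c _; rewrite -cardsX -sum1dep_card; apply: eq_bigl => -[x y].
rewrite !inE /=; case: (collapse x =P c) => [<-|]; rewrite ?andbF ?andbT //=.
by rewrite [collapse y == _]eq_sym; case: (G x == _); case: (collapse x == collapse y).
Qed.

Lemma disjoint_colored_fiber G c :
  [disjoint colored_fiber G (w mid_lo) c & colored_fiber G (w mid_hi) c].
Proof.
apply/pred0P => x; rewrite !inE; case: (G x =P _) => [->|]; rewrite ?andbF //.
by rewrite eq_sym (negbTE w_mid) !andbF.
Qed.

Lemma card_colored_fiber_le G c :
  #|colored_fiber G (w mid_lo) c| + #|colored_fiber G (w mid_hi) c| <= #|fiber c|.
Proof.
rewrite -cardsUI (disjoint_setI0 (disjoint_colored_fiber G c)) cards0 addn0.
by apply/subset_leq_card/subsetP => x; rewrite !inE => /orP [] /andP [].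
Qed.

Lemma four_mul_card_colored_fiber_le G c :
  4 * (#|colored_fiber G (w mid_lo) c| * #|colored_fiber G (w mid_hi) c|) + rigid c
  <= #|fiber c| * #|fiber c|.
Proof.
have AB_le := card_colored_fiber_le G c.
case: (boolP [exists i, c i == None]) => [/existsP [i /eqP c_i]|/existsPn c_some].
  by rewrite (rigid_None c_i) addn0 four_mul_le_sqr.
by move: AB_le; rewrite (card_fiber_rigid c_some); have := rigid_le1 c; nia.
Qed.

Lemma four_card_split_pairs_le G : 4 * #|split_pairs G| + (n - 2) ^ d <= (n + 2) ^ d.
Proof.
rewrite card_split_pairs big_distrr -sum_rigid -sum_card_fiber_sqr -big_split /=.
by apply: leq_sum => c _; apply: four_mul_card_colored_fiber_le.
Qed.

Section ParityGridIsOptimal.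
Variable beta : 'I_n -> bool.
Hypotheses (beta_rev : forall t, beta (rev_ord t) = ~~ beta t)
           (wE : forall t, w t = if beta t then w mid_hi else w mid_lo).

Local Notation G0 := (parity_grid (d := d) (w mid_lo) (w mid_hi) beta).

Lemma parity_grid_lo x : (G0 x == w mid_lo) = ~~ parity beta x.
Proof. by rewrite /parity_grid; case: (parity beta x); rewrite ?eqxx // eq_sym (negbTE w_mid). Qed.

Lemma parity_grid_hi x : (G0 x == w mid_hi) = parity beta x.
Proof. by rewrite /parity_grid; case: (parity beta x); rewrite ?eqxx // (negbTE w_mid). Qed.

Lemma contains_line_through x y : collapse x = collapse y -> parity beta x != parity beta y ->
  contains w G0 (line_through x y).1 (line_through x y).2.
Proof.
move=> xy parity_neq; have x_neq_y : x != y by apply: contraNneq parity_neq => ->.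
have xy_valid := valid_line_through xy x_neq_y.
have := mid_pair_line_through xy x_neq_y; rewrite /mid_pair => -[x_eq y_eq].
by apply: (contains_parity_grid beta_rev wE (s := mid_lo) (t := mid_hi)); rewrite // x_eq y_eq.
Qed.

Lemma card_split_pairs_parity_le : #|split_pairs G0| <= fcount w G0.
Proof.
apply: leq_trans (leq_imset_card (orient G0) _); apply/subset_leq_card/subsetP => -[x y].
rewrite inE /= => /and3P [/eqP xy G0_x G0_y].
have yx : collapse y = collapse x by [].
have parity_neq : parity beta x != parity beta y.
  by move: G0_x G0_y; rewrite parity_grid_lo parity_grid_hi => /negbTE -> ->.
have x_neq_y : x != y by apply: contraNneq parity_neq => ->.
have y_neq_x : y != x by rewrite eq_sym.
apply/imsetP; case: (boolP (canonical_dir (dir_through x y))) => can.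
  exists (line_through x y); last by rewrite /orient mid_pair_line_through // G0_x.
  by rewrite inE can valid_line_through ?contains_line_through.
exists (line_through y x).
  rewrite inE /= {1}(dir_through_swap xy) canonical_dir_opp ?can; last first.
    by case/andP: (valid_line_through xy x_neq_y).
  by rewrite valid_line_through ?contains_line_through // eq_sym.
by rewrite /orient mid_pair_line_through //= parity_grid_lo -parity_grid_hi G0_y.
Qed.

Lemma card_colored_fiber_parity c :
  #|colored_fiber G0 (w mid_lo) c| + #|colored_fiber G0 (w mid_hi) c| = #|fiber c|.
Proof.
rewrite -cardsUI (disjoint_setI0 (disjoint_colored_fiber G0 c)) cards0 addn0.
apply: eq_card => x; rewrite !inE parity_grid_lo parity_grid_hi.
by case: (collapse x == c); case: (parity beta x).
Qed.

Lemma card_colored_fiber_mirror c i0 : c i0 = None ->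
  #|colored_fiber G0 (w mid_lo) c| = #|colored_fiber G0 (w mid_hi) c|.
Proof.
move=> c_i0.
have mirror_le s1 s2 : (forall x, (G0 (mirror_at i0 x) == s2) = (G0 x == s1)) ->
    #|colored_fiber G0 s1 c| <= #|colored_fiber G0 s2 c|.
  move=> mirror_eq; rewrite -(card_imset _ (can_inj (mirror_atK i0))).
  apply/subset_leq_card/subsetP => _ /imsetP [x + ->]; rewrite !inE => /andP [/eqP x_c G0_x].
  by rewrite collapse_mirror_at x_c ?eqxx ?mirror_eq.
apply/eqP; rewrite eqn_leq !mirror_le // => x;
  by rewrite !parity_grid_lo !parity_grid_hi (parity_mirror_at beta_rev) ?negbK.
Qed.

Lemma four_mul_card_colored_fiber_parity c :
  4 * (#|colored_fiber G0 (w mid_lo) c| * #|colored_fiber G0 (w mid_hi) c|) + rigid c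
  = #|fiber c| * #|fiber c|.
Proof.
have AB_eq := card_colored_fiber_parity c.
case: (boolP [exists i, c i == None]) => [/existsP [i /eqP c_i]|/existsPn c_some].
  by rewrite (rigid_None c_i) addn0 -AB_eq (card_colored_fiber_mirror c_i); nia.
by move: AB_eq; rewrite (card_fiber_rigid c_some); have := rigid_le1 c; nia.
Qed.

Lemma four_card_split_pairs_parity : 4 * #|split_pairs G0| + (n - 2) ^ d = (n + 2) ^ d.
Proof.
rewrite card_split_pairs big_distrr -sum_rigid -sum_card_fiber_sqr -big_split /=.
by apply: eq_bigr => c _; apply: four_mul_card_colored_fiber_parity.
Qed.

Lemma fmax_parity_grid : exists m, is_fmax d w m /\ 4 * m + (n - 2) ^ d = (n + 2) ^ d.
Proof.
exists #|split_pairs G0|; split; last exact: four_card_split_pairs_parity.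
split.
  by exists G0; apply/eqP; rewrite eqn_leq fcount_le_split_pairs card_split_pairs_parity_le.
move=> G; apply: leq_trans (fcount_le_split_pairs G) _.
by have := four_card_split_pairs_le G; have := four_card_split_pairs_parity; lia.
Qed.

End ParityGridIsOptimal.
End SplitPairs.
End CentralPair.

Theorem theorem7 (S : eqType) (n d : nat) (w : 'I_n -> S) :
  2 <= n -> 0 < d ->
  (exists a b : S, forall i, w i = a \/ w i = b) ->
  (forall i : 'I_n, w i != w (rev_ord i)) ->
  exists m : nat, is_fmax d w m /\ 4 * m = (n + 2) ^ d - (n - 2) ^ d.
Proof.
move=> n_ge2 _ [a [b w_ab]] w_anti.
have n_eq : n = (n./2.-1).*2.+2.
  by have := antipalindromic_even w_anti; have := odd_double_half n; case: (odd n) => //=; lia.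
have w_mid : w (mid_lo n_eq) != w (mid_hi n_eq) by rewrite -rev_mid_lo.
set lo := mid_lo n_eq in w_mid *; set hi := mid_hi n_eq in w_mid *.
have w_two t : w t = w lo \/ w t = w hi by apply: two_values (w_ab lo) (w_ab hi) (w_ab t) w_mid.
pose beta t := w t != w lo.
have wE t : w t = if beta t then w hi else w lo.
  by rewrite /beta; case: (w_two t) => ->; rewrite ?eqxx // [w hi == _]eq_sym w_mid.
have beta_rev t : beta (rev_ord t) = ~~ beta t.
  rewrite /beta negbK; move: (w_anti t); case: (w_two t) (w_two (rev_ord t)) => -> [] ->;
  by rewrite ?eqxx //= [w hi == _]eq_sym ?w_mid ?(negbTE w_mid).
have [m [m_fmax m_eq]] := fmax_parity_grid d w_mid beta_rev wE.
by exists m; split => //; lia.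
Qed.
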